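(* Let $(M,J,g)$ be a $(J^2=\pm1)$-metric manifold with $\alpha\varepsilon=-1$. The following are equivalent: (i) $\widetilde N_J^{-1}=0$; (ii) $(\nabla^g_X\Phi)(Y,Z)-\alpha(\nabla^g_{JX}\Phi)(JY,Z)=0$ for all $X,Y,Z$; (iii) $(\nabla^g_XJ)Y-\alpha(\nabla^g_{JX}J)JY=0$ for all $X,Y$; (iv) $(M,J,g)$ is of quasi-Kähler type, i.e. $(\nabla^g_XJ)JY-(\nabla^g_{JX}J)Y=0$ for all $X,Y$; (v) $(\nabla^g_XJ)X-\alpha(\nabla^g_{JX}J)JX=0$ for all $X$.
   Context: A $(J^2=\pm1)$-metric manifold $(M,J,g)$ is a smooth manifold $M$ with a semi-Riemannian metric $g$ and a $(1,1)$-tensor field $J$ such that $J^2=\alpha\,\mathrm{Id}$, $\mathrm{trace}\,J=0$, $g(JX,JY)=\varepsilon g(X,Y)$ for all vector fields, where $\alpha,\varepsilon\in\{-1,1\}$, and $g$ is Riemannian when $\varepsilon=1$. $\nabla^g$ is the Levi-Civita connection; $\Phi(X,Y)=g(JX,Y)$ is the fundamental tensor. The second Nijenhuis tensor is $\widetilde N_J^{\alpha\varepsilon}(X,Y)=(\nabla^g_XJ)JY+\alpha\varepsilon\big((\nabla^g_{JX}J)Y+(\nabla^g_YJ)JX\big)+(\nabla^g_{JY}J)X$; for $\alpha\varepsilon=-1$ it is denoted $\widetilde N_J^{-1}$. *)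

(* Algebraic (Koszul-style) model of a semi-Riemannian
   manifold: A = algebra of smooth functions over the reals R,
   V = A-module of vector fields, act X f = X(f), bracket = Lie bracket. *)
From HB Require Import structures.
From mathcomp Require Import all_boot all_order all_algebra.
Set Implicit Arguments. Unset Strict Implicit. Unset Printing Implicit Defensive.
Import Order.TTheory GRing.Theory Num.Theory.
Local Open Scope ring_scope.

Section Geometry.
Variables (R : realFieldType) (A : comAlgType R) (V : lmodType A).
Variables (act : V -> A -> A) (bracket : V -> V -> V).

Definition vector_field_structure : Prop :=
  [/\ (forall (f : A) X Y h, act (f *: X + Y) h = f * act X h + act Y h),
      (forall X (c : R) h1 h2, act X (c *: h1 + h2) = c *: act X h1 + act X h2),
      (forall X h1 h2, act X (h1 * h2) = act X h1 * h2 + h1 * act X h2) &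
      (forall X Y h, act (bracket X Y) h = act X (act Y h) - act Y (act X h))].

Definition semi_riemannian (g : V -> V -> A) : Prop :=
  [/\ (forall (f : A) X Y Z, g (f *: X + Y) Z = f * g X Z + g Y Z),
      (forall X Y, g X Y = g Y X) &
      (forall X, (forall Z, g X Z = 0) -> X = 0)].

Definition J2_metric (g : V -> V -> A) (J : V -> V) (alpha eps : A) : Prop :=
  [/\ alpha = 1 \/ alpha = -1, eps = 1 \/ eps = -1,
      (forall (f : A) X Y, J (f *: X + Y) = f *: J X + J Y),
      (forall X, J (J X) = alpha *: X) &
      (forall X Y, g (J X) (J Y) = eps * g X Y)].

Definition levi_civita (g : V -> V -> A) (nabla : V -> V -> V) : Prop :=
  [/\ (forall (f : A) X Y Z, nabla (f *: X + Y) Z = f *: nabla X Z + nabla Y Z),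
      (forall X Y Z, nabla X (Y + Z) = nabla X Y + nabla X Z),
      (forall (f : A) X Y, nabla X (f *: Y) = act X f *: Y + f *: nabla X Y),
      (forall X Y Z, act X (g Y Z) = g (nabla X Y) Z + g Y (nabla X Z)) &
      (forall X Y, nabla X Y - nabla Y X = bracket X Y)].

Definition nablaJ (nabla : V -> V -> V) (J : V -> V) (X Y : V) : V :=
  nabla X (J Y) - J (nabla X Y).

Definition Phi (g : V -> V -> A) (J : V -> V) (X Y : V) : A := g (J X) Y.

Definition nablaPhi (g : V -> V -> A) (J : V -> V) (nabla : V -> V -> V)
  (X Y Z : V) : A :=
  act X (Phi g J Y Z) - Phi g J (nabla X Y) Z - Phi g J Y (nabla X Z).

Definition N2 (nabla : V -> V -> V) (J : V -> V) (alpha eps : A) (X Y : V) : V :=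
  nablaJ nabla J X (J Y)
  + (alpha * eps) *: (nablaJ nabla J (J X) Y + nablaJ nabla J Y (J X))
  + nablaJ nabla J (J Y) X.

End Geometry.

From HB Require Import structures.
From mathcomp Require Import all_boot all_order all_algebra.
Set Implicit Arguments. Unset Strict Implicit. Unset Printing Implicit Defensive.
Import Order.TTheory GRing.Theory Num.Theory.
Local Open Scope ring_scope.

(* Write D X Y for (nabla_X J) Y.  Since J^2 = alpha is parallel, each D X
   anticommutes with J.  Put B X Y := D X Y - alpha D (J X) (J Y) (this is
   [Jdefect]): condition (iii) says B = 0, (iv) says B X (J Y) = 0, (v) says
   B is alternating, (ii) says g (B X Y) Z = 0, and for alpha eps = -1 the
   tensor N2 X Y is B X (J Y) - B Y (J X).  Anticommutation gives
   B X (J Y) = - J (B X Y) = - B (J X) Y; hence if (X, Y) |-> B X (J Y) is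
   symmetric then J (B X (J Y)) = - J (B X (J Y)), so B vanishes as 2 is
   invertible, and an alternating B makes it symmetric. *)

Lemma addvv_eq0 {R : numFieldType} {A : lalgType R} {V : lmodType A} {v : V} :
  v + v = 0 -> v = 0.
Proof.
move=> vv0; have half2 : (2^-1 : R)%:A * (1 + 1) = 1 :> A.
  rewrite -scalerAl mul1r -mulr2n -(scaler_nat (V := A)) scalerA.
  by rewrite mulVf ?pnatr_eq0 ?scale1r.
by rewrite -[v]scale1r -half2 -scalerA scalerDl scale1r vv0 scaler0.
Qed.

Section Defect.
Variables (R : numFieldType) (A : comAlgType R) (V : lmodType A).
Variables (a : A) (J : {linear V -> V}) (D : {bilinear V -> V -> V}).
Hypotheses (a2 : a * a = 1) (JJ : forall X, J (J X) = a *: X).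
Hypothesis DJr : forall X Y, D X (J Y) = - J (D X Y).

Definition Jdefect X Y := D X Y - a *: D (J X) (J Y).

Lemma scalerKa (v : V) : a *: (a *: v) = v.
Proof. by rewrite scalerA a2 scale1r. Qed.

Lemma Jdefect_Jr X Y : Jdefect X (J Y) = D X (J Y) - D (J X) Y.
Proof. by rewrite /Jdefect JJ linearZr scalerKa. Qed.

Lemma Jdefect_Jl X Y : Jdefect (J X) Y = - Jdefect X (J Y).
Proof. by rewrite Jdefect_Jr /Jdefect JJ linearZl scalerKa opprB. Qed.

Lemma Jdefect_Jr_J X Y : Jdefect X (J Y) = - J (Jdefect X Y).
Proof.
rewrite Jdefect_Jr /Jdefect linearB linearZ /= !DJr linearN JJ.
by rewrite scalerN scalerKa opprK opprD.
Qed.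

Lemma Jdefect_eq0_Jr :
  (forall X Y, Jdefect X (J Y) = 0) -> forall X Y, Jdefect X Y = 0.
Proof. by move=> B0 X Y; rewrite -[Y]scalerKa -JJ B0. Qed.

Lemma Jdefect_eq0_Jsym :
  (forall X Y, Jdefect X (J Y) = Jdefect Y (J X)) ->
  forall X Y, Jdefect X Y = 0.
Proof.
move=> Bsym; apply: Jdefect_eq0_Jr => X Y.
have JB : J (Jdefect X (J Y)) = Jdefect (J X) (J Y).
  by rewrite [RHS]Jdefect_Jr_J Jdefect_Jl linearN opprK.
have JB2 : J (Jdefect X (J Y)) + J (Jdefect X (J Y)) = 0.
  by rewrite {1}JB Bsym Jdefect_Jr_J (Bsym Y X) addNr.
by rewrite -[LHS]scalerKa -[a *: Jdefect _ _]JJ (addvv_eq0 JB2) linear0 scaler0.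
Qed.

Lemma JdefectDl X1 X2 Y : Jdefect (X1 + X2) Y = Jdefect X1 Y + Jdefect X2 Y.
Proof. by rewrite /Jdefect linearD /= !linearDl scalerDr opprD addrACA. Qed.

Lemma JdefectDr X Y1 Y2 : Jdefect X (Y1 + Y2) = Jdefect X Y1 + Jdefect X Y2.
Proof. by rewrite /Jdefect !linearD /= addrACA. Qed.

Lemma Jdefect_skew :
  (forall X, Jdefect X X = 0) -> forall X Y, Jdefect X Y = - Jdefect Y X.
Proof.
move=> Balt X Y; apply/eqP; rewrite -addr_eq0.
have := Balt (X + Y); rewrite JdefectDl !JdefectDr !Balt add0r addr0.
by move=> ->.
Qed.

Lemma Jdefect_alt_Jsym :
  (forall X, Jdefect X X = 0) -> forall X Y, Jdefect X (J Y) = Jdefect Y (J X).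
Proof.
by move=> Balt X Y; rewrite -[LHS]opprK -Jdefect_Jl Jdefect_skew // opprK.
Qed.

Lemma Jdefect_tfae :
  [<-> (forall X Y, Jdefect X (J Y) = Jdefect Y (J X));
       (forall X Y, Jdefect X Y = 0);
       (forall X Y, D X (J Y) - D (J X) Y = 0);
       (forall X, Jdefect X X = 0)].
Proof.
tfae=> [|B0 X Y|B0 X|]; first exact: Jdefect_eq0_Jsym.
- by rewrite -Jdefect_Jr B0.
- by apply: Jdefect_eq0_Jr => {}X Y; rewrite Jdefect_Jr B0.
- exact: Jdefect_alt_Jsym.
Qed.

End Defect.

Section LeviCivita.
Variables (R : realFieldType) (A : comAlgType R) (V : lmodType A).
Variables (act : V -> A -> A) (bracket : V -> V -> V) (g : V -> V -> A).
Variables (J : {linear V -> V}) (nabla : V -> V -> V) (alpha : A).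
Hypotheses (vfs : vector_field_structure act bracket) (sR : semi_riemannian g).
Hypothesis LC : levi_civita act bracket g nabla.
Hypothesis alpha_sign : alpha = 1 \/ alpha = -1.
Hypothesis JJ : forall X, J (J X) = alpha *: X.

Lemma act_scalar (c : R) X : act X c%:A = 0.
Proof.
case: vfs => _ actR actM _.
have act0 : act X 0 = 0 by have := actM X 0 0; rewrite !mulr0 mul0r addr0.
have act1 : act X 1 = 0.
  have := actM X 1 1; rewrite !mulr1 mul1r => act1D.
  by apply: (addrI (act X 1)); rewrite addr0 -act1D.
by rewrite -[c%:A]addr0 actR act1 act0 scaler0 addr0.
Qed.

Lemma act_sign X : act X alpha = 0.
Proof.
by case: alpha_sign => ->; [rewrite -[1 : A]scale1r | rewrite -scaleN1r];
  apply: act_scalar.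
Qed.

Lemma gBZl f X Y Z : g (X - f *: Y) Z = g X Z - f * g Y Z.
Proof. by case: sR => gL _ _; rewrite addrC -scaleNr gL mulNr addrC. Qed.

Lemma nablaJ_bilinear : bilinear_for *:%R *:%R (nablaJ nabla J).
Proof.
case: LC => nL nD nLeib _ _; split=> [Z f X Y | X f Y Z]; rewrite /nablaJ /=.
- by rewrite !nL linearP scalerBr opprD addrACA.
- rewrite linearP !nD !nLeib !linearD !linearZ /=.
  by rewrite scalerN addrACA (addrACA (act X f *: J Y)) subrr add0r.
Qed.

Lemma nablaJ_Jr X Y : nablaJ nabla J X (J Y) = - J (nablaJ nabla J X Y).
Proof.
case: LC => _ _ nLeib _ _.
by rewrite /nablaJ JJ nLeib act_sign scale0r add0r linearB JJ opprB.
Qed.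

Lemma nablaPhiE X Y Z : nablaPhi act g J nabla X Y Z = g (nablaJ nabla J X Y) Z.
Proof.
case: LC => _ _ _ nM _.
rewrite /nablaPhi /Phi nM addrAC addrK /nablaJ.
by rewrite -[in RHS](scale1r (J (nabla X Y))) gBZl mul1r.
Qed.

Lemma nablaPhiJ_eq0_iff :
  (forall X Y Z, nablaPhi act g J nabla X Y Z
                 - alpha * nablaPhi act g J nabla (J X) (J Y) Z = 0) <->
  (forall X Y, nablaJ nabla J X Y - alpha *: nablaJ nabla J (J X) (J Y) = 0).
Proof.
have E X Y Z : nablaPhi act g J nabla X Y Z
                 - alpha * nablaPhi act g J nabla (J X) (J Y) Z
             = g (nablaJ nabla J X Y - alpha *: nablaJ nabla J (J X) (J Y)) Z.
  by rewrite gBZl !nablaPhiE.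
have g0 Z : g 0 Z = 0.
  by have := gBZl 1 0 0 Z; rewrite scaler0 subrr mul1r subrr.
case: sR => _ _ gN; split=> [h X Y | h X Y Z]; last by rewrite E h g0.
by apply: gN => Z; rewrite -E h.
Qed.

Lemma N2_antiE (eps : A) X Y :
  alpha * eps = -1 ->
  N2 nabla J alpha eps X Y =
    nablaJ nabla J X (J Y) - nablaJ nabla J (J X) Y
    - (nablaJ nabla J Y (J X) - nablaJ nabla J (J Y) X).
Proof.
move=> ae; rewrite /N2 ae; move: (nablaJ nabla J) => D.
by rewrite scaleN1r opprD opprB !addrA [LHS]addrAC.
Qed.

End LeviCivita.

Theorem mainTheorem7 (R : realFieldType) (A : comAlgType R) (V : lmodType A)
  (act : V -> A -> A) (bracket : V -> V -> V)
  (g : V -> V -> A) (J : V -> V) (nabla : V -> V -> V) (alpha eps : A) :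
  vector_field_structure act bracket ->
  semi_riemannian g ->
  J2_metric g J alpha eps ->
  levi_civita act bracket g nabla ->
  alpha * eps = -1 ->
  [<-> (forall X Y, N2 nabla J alpha eps X Y = 0);
       (forall X Y Z, nablaPhi act g J nabla X Y Z
                      - alpha * nablaPhi act g J nabla (J X) (J Y) Z = 0);
       (forall X Y, nablaJ nabla J X Y - alpha *: nablaJ nabla J (J X) (J Y) = 0);
       (forall X Y, nablaJ nabla J X (J Y) - nablaJ nabla J (J X) Y = 0);
       (forall X, nablaJ nabla J X X - alpha *: nablaJ nabla J (J X) (J X) = 0)].
Proof.
move=> vfs sR [alpha_sign _ J_lin JJ _] LC ae.
pose Jl : {linear V -> V} := HB.pack J (GRing.isLinear.Build _ _ _ _ J J_lin).
pose D : {bilinear V -> V -> V} := HB.pack (nablaJ nabla J)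
  (bilinear_isBilinear.Build _ _ _ _ _ _ _ (nablaJ_bilinear Jl LC)).
have alpha2 : alpha * alpha = 1.
  by case: alpha_sign => ->; rewrite ?mulrNN mulr1.
have DJr : forall X Y, D X (Jl Y) = - Jl (D X Y).
  exact: (nablaJ_Jr (J := Jl) vfs LC alpha_sign JJ).
have tfaeB := Jdefect_tfae (J := Jl) alpha2 JJ DJr.
have N2E : (forall X Y, N2 nabla J alpha eps X Y = 0) <->
    (forall X Y, Jdefect alpha Jl D X (Jl Y) = Jdefect alpha Jl D Y (Jl X)).
  split=> h X Y; have := h X Y; rewrite (N2_antiE Jl) // ?Jdefect_Jr //.
    by move=> /eqP; rewrite subr_eq0 => /eqP.
  by move=> ->; rewrite subrr.
have iiE := nablaPhiJ_eq0_iff Jl alpha sR LC.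
tfae.
- by move=> /N2E /(tfaeB 0 1) /iiE.
- by move=> /iiE.
- exact: (tfaeB 1 2).1.
- exact: (tfaeB 2 3).1.
- by move=> /(tfaeB 3 0) /N2E.
Qed.
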